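(* Consider $\min_{\beta\in\mathbb{R}^p} f(\beta)+\sum_{j=1}^p g_j(\beta_j)$ under the following hypotheses: $f$ is convex, differentiable, with $|\nabla_j f(x+he_j)-\nabla_j f(x)|\le L_j|h|$ ($L_j>0$); each $g_j$ is proper, closed, lower bounded and $g_j/L_j+\frac{\alpha}{2}(\cdot)^2$ is convex for some $\alpha<1$; cyclic proximal coordinate descent converges to a critical point $\hat\beta$; with $\mathcal{S}=\mathrm{gsupp}(\hat\beta)=\{j_1,\dots,j_{|\mathcal{S}|}\}$, $-\nabla_j f(\hat\beta)\in\mathrm{interior}(\partial g_j(\hat\beta_j))$ for $j\notin\mathcal{S}$, $f$ is $\mathcal{C}^3$ near $\hat\beta$, $g_j$ is $\mathcal{C}^3$ near $\hat\beta_j$ for $j\in\mathcal{S}$, and $M:=\nabla^2_{\mathcal{S},\mathcal{S}}f(\hat\beta)+\nabla^2_{\mathcal{S},\mathcal{S}}g(\hat\beta)\succ0$. Let $\gamma_j=1/L_j$ and, for $s\in[|\mathcal{S}|]$, $B^{(s)}=M^{1/2}_{:s}\,\frac{\gamma_{j_s}}{1+\gamma_{j_s}g_{j_s}''(\hat\beta_{j_s})}\,(M^{1/2}_{:s})^\top$, where $M^{1/2}_{:s}$ is the $s$-th column of $M^{1/2}$. Then for all $s\in[|\mathcal{S}|]$, $\|B^{(s)}\|_2\le1$.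
   Context: $\partial$ is the Fréchet subdifferential, critical point means $-\nabla f(x)\in\partial g(x)$ with $g(\beta)=\sum_jg_j(\beta_j)$, and $\mathrm{gsupp}(\beta)=\{j:\partial g_j(\beta_j)\text{ is a singleton}\}$. $\nabla^2_{\mathcal{S},\mathcal{S}}g(\hat\beta)=\mathrm{diag}(g_j''(\hat\beta_j))_{j\in\mathcal{S}}$. Cyclic proximal coordinate descent updates, for $j=1,\dots,p$ in turn, $\beta_j\leftarrow\mathrm{prox}_{g_j/L_j}(\beta_j-\nabla_jf(\beta)/L_j)$, with $\mathrm{prox}_h(z)=\arg\min_u\frac12(u-z)^2+h(u)$. *)

From HB Require Import structures.
From mathcomp Require Import all_boot all_order all_algebra.
From mathcomp Require Import all_classical all_reals all_analysis.
Set Implicit Arguments. Unset Strict Implicit. Unset Printing Implicit Defensive.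
Import Order.TTheory GRing.Theory Num.Theory.
Import numFieldNormedType.Exports.
Local Open Scope classical_set_scope.
Local Open Scope ring_scope.

Definition ecoord {R : realType} {p : nat} (j : 'I_p) : 'rV[R]_p := delta_mx 0 j.

Definition pderiv {R : realType} {p : nat} (j : 'I_p) (f : 'rV[R]_p -> R)
  : 'rV[R]_p -> R := fun x => 'D_(ecoord j) f x.

Definition convex_fun {R : realType} {p : nat} (f : 'rV[R]_p -> R) : Prop :=
  forall x y (t : R), (0 <= t <= 1)%R ->
    f (t *: x + (1 - t) *: y) <= t * f x + (1 - t) * f y.

Definition econvex1 {R : realType} (h : R -> \bar R) : Prop :=
  forall x y (t : R), (0 < t < 1)%R ->
    (h (t * x + (1 - t) * y)%R <= t%:E * h x + (1 - t)%:E * h y)%E.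

Definition proper_fun {R : realType} (h : R -> \bar R) : Prop :=
  (forall x, h x != -oo%E) /\ exists x, h x \is a fin_num.

Definition lower_bounded {R : realType} (h : R -> \bar R) : Prop :=
  exists m : R, forall x, (m%:E <= h x)%E.

(* Frechet (regular) subdifferential of h : R -> \bar R at x. *)
Definition fsubdiff {R : realType} (h : R -> \bar R) (x : R) : set R :=
  [set v | h x \is a fin_num /\
     forall eps : R, 0 < eps -> exists2 d : R, 0 < d &
       forall y, `|y - x| < d ->
         (h x + (v * (y - x) - eps * `|y - x|)%:E <= h y)%E].

Definition is_singleton {T} (A : set T) : Prop := exists v, A = [set v].

Definition gsupp {R : realType} {p : nat} (g : 'I_p -> R -> \bar R)
  (beta : 'rV[R]_p) : {set 'I_p} :=
  [set j | `[< is_singleton (fsubdiff (g j) (beta 0 j)) >]].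

Definition set_coord {R : realType} {p : nat} (z : 'rV[R]_p) (j : 'I_p) (u : R)
  : 'rV[R]_p := \row_i (if i == j then u else z 0 i).

Definition is_prox {R : realType} (h : R -> \bar R) (z u : R) : Prop :=
  forall w, (((u - z) ^+ 2 / 2)%:E + h u <= ((w - z) ^+ 2 / 2)%:E + h w)%E.

(* beta is a run of cyclic proximal coordinate descent: beta (k*p + j) is the
   iterate before the j-th update of the k-th sweep. *)
Definition pcd_run {R : realType} {p : nat} (f : 'rV[R]_p -> R)
  (g : 'I_p -> R -> \bar R) (L : 'I_p -> R) (beta : nat -> 'rV[R]_p) : Prop :=
  forall (k : nat) (j : 'I_p),
    let z := beta (k * p + j)%N in
    exists2 u : R,
      is_prox (fun v => ((L j)^-1%:E * g j v)%E) (z 0 j - pderiv j f z / L j) u &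
      beta (k * p + j).+1 = set_coord z j u.

Definition C3_near {R : realType} {p : nat} (f : 'rV[R]_p -> R) (x : 'rV[R]_p)
  : Prop :=
  exists2 U : set 'rV[R]_p, open U /\ U x &
    forall y, U y -> forall i j k : 'I_p,
      [/\ {for y, continuous f},
          derivable f y (ecoord i) /\ {for y, continuous (pderiv i f)},
          derivable (pderiv i f) y (ecoord j) /\
            {for y, continuous (pderiv j (pderiv i f))} &
          derivable (pderiv j (pderiv i f)) y (ecoord k) /\
            {for y, continuous (pderiv k (pderiv j (pderiv i f)))}].

Definition C3_near1 {R : realType} (h : R -> \bar R) (x : R) : Prop :=
  exists2 U : set R, open U /\ U x &
    forall y, U y -> h y \is a fin_num /\
      forall n : nat, (n <= 3)%N ->
        {for y, continuous (derive1n n (fine \o h))} /\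
        ((n < 3)%N -> derivable (derive1n n (fine \o h)) y 1).

Definition d2 {R : realType} (h : R -> \bar R) (x : R) : R :=
  derive1n 2 (fine \o h) x.

Definition hess {R : realType} {p : nat} (f : 'rV[R]_p -> R) (x : 'rV[R]_p)
  (i k : 'I_p) : R := pderiv k (pderiv i f) x.

(* M = nabla^2_{S,S} f(beta) + diag(g_j''(beta_j))_{j in S}, with S enumerated
   as j_1 < ... < j_|S| (j_s = enum_val s). *)
Definition Mmat {R : realType} {p : nat} (f : 'rV[R]_p -> R)
  (g : 'I_p -> R -> \bar R) (S : {set 'I_p}) (beta : 'rV[R]_p) : 'M[R]_#|S| :=
  \matrix_(s, t) (hess f beta (enum_val s) (enum_val t)
                  + (s == t)%:R * d2 (g (enum_val s)) (beta 0 (enum_val s))).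

Definition posdef {R : realType} {n : nat} (M : 'M[R]_n) : Prop :=
  M^T = M /\ forall v : 'cV[R]_n, v != 0 -> 0 < (v^T *m M *m v) 0 0.

Definition psd {R : realType} {n : nat} (M : 'M[R]_n) : Prop :=
  M^T = M /\ forall v : 'cV[R]_n, 0 <= (v^T *m M *m v) 0 0.

Definition is_sqrtm {R : realType} {n : nat} (Q M : 'M[R]_n) : Prop :=
  psd Q /\ Q *m Q = M.

Definition enorm {R : realType} {n : nat} (v : 'cV[R]_n) : R :=
  Num.sqrt (\sum_i v i 0 ^+ 2).

Definition opnorm2 {R : realType} {m n : nat} (B : 'M[R]_(m, n)) : R :=
  sup [set enorm (B *m v) | v in [set v : 'cV[R]_n | enorm v <= 1]].

Definition Bmat {R : realType} {p : nat} (g : 'I_p -> R -> \bar R)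
  (L : 'I_p -> R) (S : {set 'I_p}) (beta : 'rV[R]_p) (Q : 'M[R]_#|S|)
  (s : 'I_#|S|) : 'M[R]_#|S| :=
  let j := enum_val s in
  let gam := (L j)^-1 in
  (gam / (1 + gam * d2 (g j) (beta 0 j))) *: (col s Q *m (col s Q)^T).

From HB Require Import structures.
From mathcomp Require Import all_boot all_order all_algebra.
From mathcomp Require Import all_classical all_reals all_analysis.
From mathcomp Require Import ring lra.
Import Order.TTheory GRing.Theory Num.Theory.
Import numFieldNormedType.Exports.
Local Open Scope classical_set_scope.
Local Open Scope ring_scope.

(* B^(s) is the rank-one matrix c q q^T with q the s-th column of M^{1/2}
   and c = 1/(L_j + g_j''), so ||B^(s)||_2 <= c ||q||^2 = c M_ss by
   Cauchy-Schwarz and symmetry of M^{1/2}.  Since M_ss = H_jj + g_j'' > 0 and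
   the coordinatewise Lipschitz bound on nabla_j f gives H_jj <= L_j, we get
   c M_ss = (H_jj + g_j'') / (L_j + g_j'') <= 1. *)

Lemma sum_sqr_ge0 (R : realDomainType) (I : finType) (u : I -> R) :
  0 <= \sum_i u i ^+ 2.
Proof. by apply: sumr_ge0 => i _; exact: sqr_ge0. Qed.

Lemma CauchySchwarz_sum (R : realFieldType) (I : finType) (u v : I -> R) :
  (\sum_i u i * v i) ^+ 2 <= (\sum_i u i ^+ 2) * (\sum_i v i ^+ 2).
Proof.
set P := \sum_i u i * v i; set N := \sum_i u i ^+ 2; set V := \sum_i v i ^+ 2.
have [N0 | N_gt0] := eqVneq N 0.
  have u0 i : u i = 0.
    apply/eqP; rewrite -sqrf_eq0; apply/eqP.
    by apply: (psumr_eq0P _ N0) => // k _; exact: sqr_ge0.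
  by rewrite /P big1 ?expr0n ?N0 ?mul0r // => i _; rewrite u0 mul0r.
have expand : \sum_i (P * u i - N * v i) ^+ 2 = N * (N * V - P ^+ 2).
  rewrite (eq_bigr (fun i => P ^+ 2 * u i ^+ 2 - (2 * P * N) * (u i * v i)
                              + N ^+ 2 * v i ^+ 2)); last by move=> i _; ring.
  rewrite !big_split /= sumrN -!mulr_sumr -/P -/N -/V; ring.
have : 0 <= N * (N * V - P ^+ 2).
  by rewrite -expand; apply: sumr_ge0 => i _; exact: sqr_ge0.
by rewrite pmulr_rge0 ?lt_def ?N_gt0 ?sum_sqr_ge0 // subr_ge0 mulrC.
Qed.

Section EuclideanNorm2.
Context {R : realType} {n : nat}.
Implicit Types (u v : 'cV[R]_n) (a : R).

Lemma enorm_ge0 v : 0 <= enorm v.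
Proof. exact: sqrtr_ge0. Qed.

Lemma enorm_sqr v : enorm v ^+ 2 = \sum_i v i 0 ^+ 2.
Proof. by rewrite sqr_sqrtr // sum_sqr_ge0. Qed.

Lemma enorm0 : enorm (0 : 'cV[R]_n) = 0.
Proof. by rewrite /enorm big1 ?sqrtr0 // => i _; rewrite mxE expr0n. Qed.

Lemma enormZ a v : enorm (a *: v) = `|a| * enorm v.
Proof.
rewrite /enorm -sqrtr_sqr -sqrtrM ?sqr_ge0 // mulr_sumr.
by congr Num.sqrt; apply: eq_bigr => i _; rewrite mxE exprMn.
Qed.

Lemma dot_le_enorm u v : `|\sum_i u i 0 * v i 0| <= enorm u * enorm v.
Proof.
rewrite -sqrtr_sqr /enorm -sqrtrM ?sum_sqr_ge0 // ler_sqrt.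
  exact: CauchySchwarz_sum.
by rewrite mulr_ge0 ?sum_sqr_ge0.
Qed.

Lemma opnorm2_le m (B : 'M[R]_(m, n)) (k : R) :
  0 <= k -> (forall v, enorm (B *m v) <= k * enorm v) -> opnorm2 B <= k.
Proof.
move=> k_ge0 Bk; apply: ge_sup.
  by exists (enorm (B *m 0)), 0 => //=; rewrite enorm0 ler01.
move=> _ [v /= v_le1 <-]; apply: le_trans (Bk v) _.
exact: ler_piMr.
Qed.

Lemma rank_one_mulmx a (q v : 'cV[R]_n) :
  (a *: (q *m q^T)) *m v = (a * \sum_i q i 0 * v i 0) *: q.
Proof.
apply/matrixP => i j; rewrite -scalemxAl -mulmxA !mxE big_ord1 !mxE (ord1 j).
under eq_bigr do rewrite !mxE.
by rewrite mulrAC mulrA.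
Qed.

Lemma opnorm2_rank_one a (q : 'cV[R]_n) :
  0 <= a -> opnorm2 (a *: (q *m q^T)) <= a * enorm q ^+ 2.
Proof.
move=> a_ge0; apply: opnorm2_le => [|v]; first by rewrite mulr_ge0 ?sqr_ge0.
rewrite rank_one_mulmx enormZ normrM (ger0_norm a_ge0) expr2 -!mulrA.
rewrite ler_wpM2l // [_ * enorm q]mulrC ler_wpM2l ?enorm_ge0 //.
exact: dot_le_enorm.
Qed.

Lemma enorm_col_sqr (Q : 'M[R]_n) s : Q^T = Q -> enorm (col s Q) ^+ 2 = (Q *m Q) s s.
Proof.
move=> QT; rewrite enorm_sqr mxE; apply: eq_bigr => i _.
rewrite !mxE expr2; congr (_ * _).
by rewrite -[in RHS]QT mxE.
Qed.

Lemma posdef_diag_gt0 (M : 'M[R]_n) s : posdef M -> 0 < M s s.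
Proof.
case=> _ Mpd; have := Mpd (delta_mx s 0).
rewrite trmx_delta -rowE -colE !mxE; apply.
apply/negP => /eqP/matrixP/(_ s 0); rewrite !mxE eqxx /= => /eqP.
by rewrite mulr1n oner_eq0.
Qed.

End EuclideanNorm2.

Lemma derive_le_lipschitz (R : realType) (V : normedModType R) (F : V -> R)
    (x e : V) (K : R) :
  derivable F x e -> (forall h : R, `|F (x + h *: e) - F x| <= K * `|h|) ->
  'D_e F x <= K.
Proof.
move=> dF FK; apply: limr_le => //; near=> h.
have h0 : h != 0 by near: h; exact: nbhs_dnbhs_neq.
have -> : (F \o shift x) (h *: e) = F (x + h *: e) by rewrite /= addrC.
apply: le_trans (ler_norm _) _.
have h_gt0 : 0 < `|h| by rewrite normr_gt0.
rewrite normrZ normfV -(ler_pM2l h_gt0) mulrA mulfV ?mul1r ?gt_eqF //.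
by rewrite mulrC.
Unshelve. all: end_near.
Qed.

Lemma invf_div_1DinvM (F : fieldType) (l d : F) :
  l != 0 -> l + d != 0 -> l^-1 / (1 + l^-1 * d) = (l + d)^-1.
Proof. by move=> l_neq0 ld_neq0; field; rewrite l_neq0 ld_neq0. Qed.

Theorem lemma2 (R : realType) (p : nat) (f : 'rV[R]_p -> R)
  (g : 'I_p -> R -> \bar R) (L : 'I_p -> R) (bhat : 'rV[R]_p) :
  convex_fun f ->
  (forall x, differentiable f x) ->
  (forall j, 0 < L j) ->
  (forall (j : 'I_p) (x : 'rV[R]_p) (h : R),
     `|pderiv j f (x + h *: ecoord j) - pderiv j f x| <= L j * `|h|) ->
  (forall j, proper_fun (g j)) ->
  (forall j, lower_semicontinuous (g j)) ->
  (forall j, lower_bounded (g j)) ->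
  (exists2 alpha : R, alpha < 1 &
     forall j, econvex1 (fun x => ((L j)^-1%:E * g j x + (alpha / 2 * x ^+ 2)%:E)%E)) ->
  (exists2 beta : nat -> 'rV[R]_p, pcd_run f g L beta & beta @ \oo --> bhat) ->
  (forall j, fsubdiff (g j) (bhat 0 j) (- pderiv j f bhat)) ->
  (forall j, j \notin gsupp g bhat ->
     interior (fsubdiff (g j) (bhat 0 j)) (- pderiv j f bhat)) ->
  C3_near f bhat ->
  (forall j, j \in gsupp g bhat -> C3_near1 (g j) (bhat 0 j)) ->
  posdef (Mmat f g (gsupp g bhat) bhat) ->
  forall Q : 'M[R]_#|gsupp g bhat|,
    is_sqrtm Q (Mmat f g (gsupp g bhat) bhat) ->
  forall s : 'I_#|gsupp g bhat|,
    opnorm2 (Bmat g L bhat Q s) <= 1.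
Proof.
move=> _ _ L_gt0 Lip _ _ _ _ _ _ _ [U [_ U_bhat] C3] _ Mpd Q [[QT _] QQ] s.
set j := enum_val s; set H := hess f bhat j j; set d := d2 (g j) (bhat 0 j).
have H_le_L : H <= L j.
  apply: derive_le_lipschitz; last exact: Lip.
  by case: (C3 bhat U_bhat j j j) => _ _ [].
have Mss : Mmat f g (gsupp g bhat) bhat s s = H + d by rewrite mxE eqxx mul1r.
have Hd_gt0 : 0 < H + d by rewrite -Mss posdef_diag_gt0.
have Ld_gt0 : 0 < L j + d by lra.
rewrite /Bmat -/j -/d invf_div_1DinvM ?gt_eqF //.
have c_ge0 : 0 <= (L j + d)^-1 by rewrite invr_ge0 ltW.
apply: le_trans (opnorm2_rank_one _ _ c_ge0) _.
by rewrite enorm_col_sqr // QQ Mss mulrC ler_pdivrMr // mul1r lerD2r.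
Qed.
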